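(* Let $h(x,y)=(y,\,p(y)-\delta x)$ be a normal generalized H\'enon transformation, $\delta\ne0$. Then $h$ is reversible by an involution in $\mathcal G$ (i.e. $h^{-1}=RhR$ for some involution $R\in\mathcal G$) if and only if either $\delta=1$, or $\delta=-1$ and $p$ is an even polynomial.
   Context: $\mathcal G$ is the group of polynomial automorphisms of $\mathbb C^2$. A generalized H\'enon transformation is $h(x,y)=(y,p(y)-\delta x)$ with $\delta\ne0$ and $p$ a polynomial of degree $l\ge2$; it is normal if $p(y)=y^l+O(y^{l-2})$ (monic with vanishing coefficient of $y^{l-1}$). *)

(* C = R[i] for R : realType (the complex numbers). *)
From HB Require Import structures.
From mathcomp Require Import all_boot all_order all_algebra.
From mathcomp Require Import complex.
From mathcomp Require Import reals.
Set Implicit Arguments. Unset Strict Implicit. Unset Printing Implicit Defensive.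
Import Order.TTheory GRing.Theory Num.Theory.
Local Open Scope ring_scope.

Section Defs.
Variable K : comNzRingType.

Definition poly_map (F : K * K -> K * K) : Prop :=
  exists P Q : {poly {poly K}},
    forall x y : K, F (x, y) = (P.[x%:P].[y], Q.[x%:P].[y]).

Definition poly_aut (F : K * K -> K * K) : Prop :=
  poly_map F /\ exists G, poly_map G /\ cancel F G /\ cancel G F.

Definition henon (p : {poly K}) (delta : K) (z : K * K) : K * K :=
  (z.2, p.[z.2] - delta * z.1).

(* Normal: p(y) = y^l + O(y^(l-2)), l = deg p >= 2. *)
Definition normal_henon_poly (p : {poly K}) : Prop :=
  (2 < size p)%N /\ p \is monic /\ p`_(size p).-2 = 0.

Definition is_even_poly (p : {poly K}) : Prop := forall y : K, p.[- y] = p.[y].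

Definition reversible_by_involution (h : K * K -> K * K) : Prop :=
  exists R : K * K -> K * K,
    poly_aut R /\ (forall z, R (R z) = z) /\
    (forall z, h (R (h (R z))) = z) /\ (forall z, R (h (R (h z))) = z).
End Defs.

From HB Require Import structures.
From mathcomp Require Import all_boot all_order all_algebra.
From mathcomp Require Import complex reals.
From Stdlib Require Import Classical Wf_nat.
From mathcomp Require Import zify ring.
Import Order.TTheory GRing.Theory Num.Theory.
Local Open Scope ring_scope.

(* Let R = (f, g) be a polynomial involution with R h = h^-1 R.  Then
   g = f o h^-1 and p(f) = d (f o h) + g, and R o h, R o h^-1 are such
   involutions again.  For one of minimal total degree deg f + deg g = n + e,
   these relations force f to contain y^n and g to contain x^e, and then
   f (f, g) = x, g (f, g) = y restricted to suitable lines leave n = e = 1.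
   An affine R is (x, y) |-> (c + B y, c + B x); comparing the two sides of
   R h = h^-1 R gives d^2 = 1, and for d = -1 also p (c - y) = p y, where
   normality of p forces c = 0.  Conversely (x, y) |-> (y, x) reverses h for
   d = 1, and (x, y) |-> (-y, -x) does for d = -1 and p even. *)

Set Implicit Arguments.
Unset Strict Implicit.
Unset Printing Implicit Defensive.

Lemma ex_minimal (P : nat -> Prop) :
  (exists n, P n) -> exists n, P n /\ forall m, P m -> (n <= m)%N.
Proof.
move=> exP; have [n [[Pn min_n] _]] :=
  dec_inh_nat_subset_has_unique_least_element P (fun n => classic (P n)) exP.
by exists n; split=> // m /min_n /ssrnat.leP.
Qed.

Section Polynomials.
Variable F : numFieldType.
Implicit Types (Q : {poly {poly F}}) (p q u v : {poly F}).

Lemma exists_nonroot p : p != 0 -> exists b, ~~ root p b.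
Proof.
move=> nz_p; pose s := [seq i%:R : F | i <- iota 0 (size p)].
suff /hasP [b _ nroot_b] : has (fun b => ~~ root p b) s by exists b.
apply/negPn/negP => /hasPn all_roots.
suff: (size s < size p)%N by rewrite size_map size_iota ltnn.
apply: max_poly_roots nz_p _ _; first by apply/allP => b /all_roots /negPn.
by rewrite map_inj_uniq ?iota_uniq // => i j /eqP; rewrite eqr_nat => /eqP.
Qed.

Lemma eq_poly_horner p q : (forall t, p.[t] = q.[t]) -> p = q.
Proof.
move=> eq_pq; apply/eqP; rewrite -subr_eq0; apply/negPn/negP => /exists_nonroot [b].
by rewrite /root hornerD hornerN eq_pq subrr eqxx.
Qed.

Lemma horner_size2 p y : (size p <= 2)%N -> p.[y] = p`_0 + p`_1 * y.
Proof.
move=> size_p; rewrite (horner_coef_wide _ size_p) !big_ord_recr big_ord0 /=.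
by rewrite add0r expr0 mulr1 expr1.
Qed.

(* The (size p - 2)-th derivative r of p is a nonzero multiple of X (its
   constant term is a multiple of p`_(size p).-2), and the symmetry gives
   r 0 = +-r c, whence c = 0. *)
Lemma reflection_center_eq0 p c : (1 < size p)%N -> p`_(size p).-2 = 0 ->
  (forall y, p.[c - y] = p.[y]) -> c = 0.
Proof.
move=> size_p sub0 sym_p; set l := (size p).-1.
have lead_neq0 : p`_l != 0 by rewrite -lead_coefE lead_coef_eq0 -size_poly_gt0 ltnW.
pose q := c%:P - 'X.
have pq : p \Po q = p.
  by apply: eq_poly_horner => t; rewrite horner_comp hornerD hornerN hornerC hornerX sym_p.
have deriv_pq k : (p \Po q)^`(k) = (-1) ^+ k *: (p^`(k) \Po q).
  elim: k => [|k IHk]; first by rewrite !derivn0 expr0 scale1r.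
  rewrite derivnS IHk derivZ deriv_comp derivB derivC derivX sub0r mulrN1.
  by rewrite derivnS exprS mulN1r scaleNr scalerN.
have := deriv_pq l.-1; rewrite pq => /(congr1 (horner^~ 0)).
rewrite hornerZ horner_comp hornerD hornerN hornerC hornerX subr0.
set r := p^`(l.-1).
have size_r : (size r <= 2)%N.
  apply/leq_sizeP => j lt_j; rewrite coef_derivn nth_default ?mul0rn //.
  by rewrite /l; move: lt_j size_p; case: (size p) => [|[|[|k]]]; lia.
have r0 : r`_0 = 0 by rewrite coef_derivn addn0 sub0 mul0rn.
have r1 : r`_1 != 0.
  rewrite coef_derivn addn1 prednK; last by rewrite /l ltn_predRL.
  by rewrite mulrn_eq0 (negbTE lead_neq0) orbF -lt0n ffact_gt0 leq_pred.
rewrite !horner_size2 // r0 mulr0 !add0r => /eqP; rewrite eq_sym mulf_eq0 signr_eq0 /=.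
by rewrite mulf_eq0 (negbTE r1) => /eqP.
Qed.

Definition horner2 Q (x y : F) := Q.[x%:P].[y].

Lemma horner2E Q x y : horner2 Q x y =
  \sum_(i < size Q) \sum_(j < size Q`_i) Q`_i`_j * x ^+ i * y ^+ j.
Proof.
rewrite /horner2 {1}(horner_coef Q) horner_sum; apply: eq_bigr => i _.
rewrite -rmorphXn hornerM hornerC (horner_coef Q`_i) mulr_suml.
by apply: eq_bigr => j _; rewrite mulrAC.
Qed.

Definition subst2 Q u v : {poly F} :=
  \sum_(i < size Q) \sum_(j < size Q`_i) (Q`_i`_j)%:P * u ^+ i * v ^+ j.

Lemma horner_subst2 Q u v t : (subst2 Q u v).[t] = horner2 Q u.[t] v.[t].
Proof.
rewrite horner2E /subst2 horner_sum; apply: eq_bigr => i _.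
rewrite horner_sum; apply: eq_bigr => j _.
by rewrite !hornerM hornerC !horner_exp.
Qed.

Definition comp2 Q (U V : {poly {poly F}}) : {poly {poly F}} :=
  \sum_(i < size Q) \sum_(j < size Q`_i) (Q`_i`_j)%:P%:P * U ^+ i * V ^+ j.

Lemma horner2_comp2 Q U V x y :
  horner2 (comp2 Q U V) x y = horner2 Q (horner2 U x y) (horner2 V x y).
Proof.
rewrite [RHS]horner2E /comp2 /horner2 horner_sum horner_sum; apply: eq_bigr => i _.
rewrite horner_sum horner_sum; apply: eq_bigr => j _.
by rewrite !hornerM !hornerC !horner_exp.
Qed.

Lemma coefM_sizes p q m n : (size p <= m.+1)%N -> (size q <= n.+1)%N ->
  (p * q)`_(m + n) = p`_m * q`_n.
Proof.
move=> sp sq; rewrite coefM (bigD1 (Ordinal (ltn_addr n (ltnSn m)))) //=.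
rewrite addKn big1 ?addr0 // => i /eqP ne_im.
have [lt_im | le_mi] := ltnP i m.
  suff -> : q`_(m + n - i) = 0 by rewrite mulr0.
  by apply: (leq_sizeP _ _ sq); lia.
rewrite [p`_ _](leq_sizeP _ _ sp) ?mul0r // ltn_neqAle le_mi andbT.
by apply/eqP => eq_im; apply: ne_im; apply: val_inj.
Qed.

Lemma size_coef_exp_top u m i : (size u <= m.+1)%N ->
  (size (u ^+ i) <= (i * m).+1)%N /\ (u ^+ i)`_(i * m) = u`_m ^+ i.
Proof.
move=> su; elim: i => [|i [IHs IHc]]; first by rewrite !expr0 size_poly1 coef1.
rewrite exprS mulSn; split; last by rewrite coefM_sizes // IHc exprS.
by apply: leq_trans (size_polyMleq _ _) _; move: su IHs; lia.
Qed.

Lemma size_coef_monomial_top (c : F) u v m n (i j : nat) :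
  (size u <= m.+1)%N -> (size v <= n.+1)%N ->
  (size (c%:P * u ^+ i * v ^+ j)%R <= (i * m + j * n).+1)%N /\
  (c%:P * u ^+ i * v ^+ j)`_(i * m + j * n) = c * u`_m ^+ i * v`_n ^+ j.
Proof.
move=> su sv; have [s1 c1] := size_coef_exp_top i su.
have [s2 c2] := size_coef_exp_top j sv.
split; last by rewrite -mulrA coefCM coefM_sizes // c1 c2 mulrA.
apply: leq_trans (size_polyMleq _ _) _.
have := size_polyMleq c%:P (u ^+ i); have := size_polyC_leq1 c.
by move: s1 s2; lia.
Qed.

Lemma size_subst2_le Q u v m n w : (size u <= m.+1)%N -> (size v <= n.+1)%N ->
  (forall i j, Q`_i`_j != 0 -> (i * m + j * n <= w)%N) ->
  (size (subst2 Q u v) <= w.+1)%N.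
Proof.
move=> su sv le_w; apply/leq_sizeP => k lt_wk; rewrite /subst2 coef_sum big1 // => i _.
rewrite coef_sum big1 // => j _.
have [->|nzQ] := eqVneq Q`_i`_j 0; first by rewrite polyC0 !mul0r coef0.
have [s _] := size_coef_monomial_top Q`_i`_j i j su sv.
by apply: (leq_sizeP _ _ s); have := le_w _ _ nzQ; lia.
Qed.

Lemma sum_ord_if_eq n (G : nat -> F) k : (forall j, (n <= j)%N -> G j = 0) ->
  \sum_(j < n) (if nat_of_ord j == k then G j else 0) = G k.
Proof.
move=> G0; rewrite -big_mkcond /= big_ord1_eq; case: ifP => // /negbT.
by rewrite -leqNgt => /G0 ->.
Qed.

Lemma coef_subst2 Q u v m n w : (size u <= m.+1)%N -> (size v <= n.+1)%N ->
  (forall i j, Q`_i`_j != 0 -> (i * m + j * n <= w)%N) ->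
  (subst2 Q u v)`_w = \sum_(i < size Q) \sum_(j < size Q`_i)
     (if (i * m + j * n == w)%N then Q`_i`_j * u`_m ^+ i * v`_n ^+ j else 0).
Proof.
move=> su sv le_w; rewrite /subst2 coef_sum; apply: eq_bigr => i _.
rewrite coef_sum; apply: eq_bigr => j _.
have [->|nzQ] := eqVneq Q`_i`_j 0; first by rewrite polyC0 !mul0r coef0; case: ifP.
have [s c] := size_coef_monomial_top Q`_i`_j i j su sv.
case: eqP => [<- //|ne_w]; apply: (leq_sizeP _ _ s).
by have := le_w _ _ nzQ; move/eqP: ne_w; lia.
Qed.

Lemma coef_subst2_dominant Q u v m n i0 j0 :
  (size u <= m.+1)%N -> (size v <= n.+1)%N ->
  (forall i j, Q`_i`_j != 0 -> (i != i0) || (j != j0) ->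
      (i * m + j * n < i0 * m + j0 * n)%N) ->
  (size (subst2 Q u v) <= (i0 * m + j0 * n).+1)%N /\
  (subst2 Q u v)`_(i0 * m + j0 * n) = Q`_i0`_j0 * u`_m ^+ i0 * v`_n ^+ j0.
Proof.
move=> su sv lt_w; set w := (i0 * m + j0 * n)%N.
have le_w i j : Q`_i`_j != 0 -> (i * m + j * n <= w)%N.
  move=> nzQ; case: (boolP ((i != i0) || (j != j0))) => [/(lt_w _ _ nzQ)/ltnW //|].
  by rewrite negb_or !negbK => /andP [/eqP -> /eqP ->].
split; first exact: size_subst2_le su sv le_w.
rewrite (coef_subst2 su sv le_w).
set X := fun i j => Q`_i`_j * u`_m ^+ i * v`_n ^+ j.
transitivity (\sum_(i < size Q) (if nat_of_ord i == i0 then X i j0 else 0)).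
  apply: eq_bigr => i _.
  transitivity (\sum_(j < size Q`_i)
      (if nat_of_ord j == j0 then (if nat_of_ord i == i0 then X i j else 0) else 0)).
    apply: eq_bigr => j _.
    have [zQ|nzQ] := eqVneq Q`_i`_j 0.
      by rewrite /X zQ !mul0r; do 3?case: ifP.
    case: (boolP ((i != i0 :> nat) || (j != j0 :> nat))) => [ne_ij|].
      rewrite (ltn_eqF (lt_w _ _ nzQ ne_ij)).
      by move: ne_ij; do 2!case: eqP.
    by rewrite negb_or !negbK => /andP [/eqP ei /eqP ej]; rewrite /w -ei -ej !eqxx.
  rewrite (sum_ord_if_eq (G := fun j => if nat_of_ord i == i0 then X i j else 0)) //.
  by move=> j le_j; case: ifP => //; rewrite /X (nth_default _ le_j) !mul0r.
rewrite (sum_ord_if_eq (G := fun i => X i j0)) //.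
by move=> i le_i; rewrite /X (nth_default _ le_i) coef0 !mul0r.
Qed.

Definition tdeg Q : nat := \max_(i < size Q | (Q`_i != 0)%R) (i + (size (Q`_i)%R).-1).

Lemma tdeg0 : tdeg 0 = 0%N.
Proof. by rewrite /tdeg size_poly0 big_ord0. Qed.

Lemma tdeg_ge Q i j : Q`_i`_j != 0 -> (i + j <= tdeg Q)%N.
Proof.
move=> nzQ; have lt_i : (i < size Q)%N.
  by rewrite ltnNge; apply: contra nzQ => /(nth_default 0) ->; rewrite coef0.
have nzQi : Q`_i != 0 by apply: contraNneq nzQ => ->; rewrite coef0.
have lt_j : (j < size (Q`_i)%R)%N by rewrite ltnNge; apply: contra nzQ => /(nth_default 0) ->.
apply: leq_trans (leq_bigmax_cond (Ordinal lt_i) nzQi); rewrite /= leq_add2l.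
by rewrite -ltnS prednK // (leq_ltn_trans _ lt_j).
Qed.

Lemma tdeg_attained Q : Q != 0 -> exists i j, Q`_i`_j != 0 /\ (i + j = tdeg Q)%N.
Proof.
move=> nzQ; have lt_last : ((size Q).-1 < size Q)%N by rewrite prednK ?lt0n ?size_poly_eq0.
have nz_last : Q`_(Ordinal lt_last) != 0 by rewrite -lead_coefE lead_coef_eq0.
rewrite /tdeg (bigop.bigmax_eq_arg (Ordinal lt_last)) //; set k := [arg max_(_ > _ | _) _].
have nzQk : Q`_k != 0 by rewrite /k; case: arg_maxnP.
by exists k, (size Q`_k).-1; rewrite -lead_coefE lead_coef_eq0.
Qed.

Lemma size_scaleX_le (c : F) : (size (c *: 'X : {poly F}) <= 2)%N.
Proof. by apply: leq_trans (size_scale_leq _ _) _; rewrite size_polyX. Qed.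

(* On a generic line through the origin the top homogeneous part survives. *)
Lemma tdeg_on_line Q : Q != 0 -> exists b,
  (size (subst2 Q (b *: 'X) 'X) <= (tdeg Q).+1)%N /\ (subst2 Q (b *: 'X) 'X)`_(tdeg Q) != 0.
Proof.
move=> nzQ; have [i0 [j0 [nzQ0 def_n]]] := tdeg_attained nzQ.
set n := tdeg Q in def_n *.
pose T := \poly_(i < size Q) Q`_i`_(n - i).
have nzT : T != 0.
  have lt_i0 : (i0 < size Q)%N.
    by rewrite ltnNge; apply: contra nzQ0 => /(nth_default 0) ->; rewrite coef0.
  apply: contraNneq nzQ0 => /(congr1 (coefp i0)) /=.
  by rewrite coef_poly lt_i0 coef0 -def_n addKn => ->.
have [b nroot_b] := exists_nonroot nzT; exists b.
have sX : (size ('X : {poly F}) <= 2)%N by rewrite size_polyX.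
have le_n i j : Q`_i`_j != 0 -> (i * 1 + j * 1 <= n)%N by rewrite !muln1; exact: tdeg_ge.
split; first exact: size_subst2_le (size_scaleX_le b) sX le_n.
rewrite (coef_subst2 (size_scaleX_le b) sX le_n) coefZ coefX eqxx mulr1.
apply: contra nroot_b => /eqP sum0; rewrite /root -sum0 horner_poly; apply/eqP.
apply: eq_bigr => i _.
rewrite -(sum_ord_if_eq (n := size Q`_i) (G := fun j => Q`_i`_j * b ^+ i) (n - i)%N);
  last first.
  by move=> j /(nth_default 0) ->; rewrite mul0r.
apply: eq_bigr => j _; rewrite !muln1 expr1n mulr1.
have [eq_n|ne_n] := eqVneq (i + j)%N n; first by rewrite -eq_n addKn eqxx.
case: eqP => // def_j; suff -> : Q`_i`_j = 0 by rewrite mul0r.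
by apply/eqP; apply: contraTT ne_n => /tdeg_ge; rewrite negbK def_j; lia.
Qed.

Lemma coef_subst2_lead_y Q u v m1 m2 :
  (size u <= m1.+1)%N -> (size v <= m2.+1)%N -> (m1 < m2)%N ->
  (size (subst2 Q u v) <= (tdeg Q * m2).+1)%N /\
  (subst2 Q u v)`_(tdeg Q * m2) = Q`_0`_(tdeg Q) * v`_m2 ^+ tdeg Q.
Proof.
move=> su sv lt_m; have := coef_subst2_dominant (Q := Q) (i0 := 0) (j0 := tdeg Q) su sv.
rewrite mul0n add0n expr0 mulr1; apply=> i j /tdeg_ge le_ij.
by case/orP => /eqP ne; nia.
Qed.

Lemma coef_subst2_lead_x Q u v m1 m2 :
  (size u <= m1.+1)%N -> (size v <= m2.+1)%N -> (m2 < m1)%N ->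
  (size (subst2 Q u v) <= (tdeg Q * m1).+1)%N /\
  (subst2 Q u v)`_(tdeg Q * m1) = Q`_(tdeg Q)`_0 * u`_m1 ^+ tdeg Q.
Proof.
move=> su sv lt_m; have := coef_subst2_dominant (Q := Q) (i0 := tdeg Q) (j0 := 0) su sv.
rewrite mul0n addn0 expr0 mulr1; apply=> i j /tdeg_ge le_ij.
by case/orP => /eqP ne; nia.
Qed.

Lemma size_poly_leq_coef0 p n : (size p <= n.+1)%N -> p`_n = 0 -> (size p <= n)%N.
Proof.
move=> sp pn0; apply/leq_sizeP => j; rewrite leq_eqVlt => /orP [/eqP <- //|].
exact: leq_sizeP.
Qed.

Definition represents Q (f : F * F -> F) := forall x y, f (x, y) = horner2 Q x y.

Definition polyfun2 (f : F * F -> F) := exists Q, represents Q f.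

(* Degrees are measured on the restrictions t |-> f (a t, b t) to lines
   through the origin, so they depend on f only. *)
Definition line_deg_le (f : F * F -> F) m := forall a b : F,
  exists2 q : {poly F}, (size q <= m.+1)%N & forall t, f (a * t, b * t) = q.[t].

Definition line_deg (f : F * F -> F) n :=
  line_deg_le f n /\ forall m, (m < n)%N -> ~ line_deg_le f m.

Lemma line_deg_le_leq f m m' : line_deg_le f m -> (m <= m')%N -> line_deg_le f m'.
Proof.
by move=> degf le_m a b; have [q sq fq] := degf a b; exists q => //; apply: leq_trans sq _.
Qed.

Lemma eq_line_deg_le f g m : f =1 g -> line_deg_le f m -> line_deg_le g m.
Proof.
by move=> eq_fg degf a b; have [q sq fq] := degf a b; exists q => // t; rewrite -eq_fg.
Qed.

Lemma eq_line_deg f g n : f =1 g -> line_deg f n -> line_deg g n.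
Proof.
move=> eq_fg [degf minf]; split; first exact: eq_line_deg_le degf.
by move=> m lt_mn /(eq_line_deg_le (fsym eq_fg)); apply: minf.
Qed.

Lemma line_deg_leq f n m : line_deg f n -> line_deg_le f m -> (n <= m)%N.
Proof. by case=> _ minf degf; rewrite leqNgt; apply/negP => /minf. Qed.

Lemma line_deg_le_lin f g c m : line_deg_le f m -> line_deg_le g m ->
  line_deg_le (fun z => c * f z + g z) m.
Proof.
move=> degf degg a b; have [q sq fq] := degf a b; have [r sr gr] := degg a b.
exists (c *: q + r) => [|t]; last by rewrite hornerD hornerZ fq gr.
apply: leq_trans (size_polyD _ _) _; rewrite geq_max sr andbT.
exact: leq_trans (size_scale_leq _ _) sq.
Qed.

Lemma line_deg_le_tdeg Q f : represents Q f -> line_deg_le f (tdeg Q).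
Proof.
move=> reprf a b; exists (subst2 Q (a *: 'X) (b *: 'X)) => [|t].
  apply: size_subst2_le (size_scaleX_le a) (size_scaleX_le b) _ => i j /tdeg_ge.
  by rewrite !muln1.
by rewrite horner_subst2 !hornerZ hornerX reprf.
Qed.

Lemma not_line_deg_le f a b r n m : (forall t, f (a * t, b * t) = r.[t]) ->
  r`_n != 0 -> (m < n)%N -> ~ line_deg_le f m.
Proof.
move=> fr nz_rn lt_mn /(_ a b) [q sq fq].
have eq_rq : r = q by apply: eq_poly_horner => t; rewrite -fr fq.
by move/eqP: nz_rn; apply; rewrite eq_rq; apply: (leq_sizeP _ _ sq).
Qed.

Lemma line_deg_tdeg Q f : represents Q f -> line_deg f (tdeg Q).
Proof.
move=> reprf; split; first exact: line_deg_le_tdeg.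
have [->|nzQ] := eqVneq Q 0; first by rewrite tdeg0.
have [b [_ nz_top]] := tdeg_on_line nzQ => m.
apply: (not_line_deg_le (a := b) (b := 1) _ nz_top) => t.
by rewrite horner_subst2 hornerZ hornerX mul1r reprf.
Qed.

Lemma line_deg_uniq f n n' : line_deg f n -> line_deg f n' -> n = n'.
Proof.
move=> degn degn'; apply/eqP; rewrite eqn_leq.
by rewrite (line_deg_leq degn (proj1 degn')) (line_deg_leq degn' (proj1 degn)).
Qed.

Lemma tdeg_line_deg Q f n : represents Q f -> line_deg f n -> tdeg Q = n.
Proof. by move=> reprf; apply: line_deg_uniq; apply: line_deg_tdeg. Qed.

Lemma line_deg_gt0 f n z1 z2 : line_deg f n -> f z1 != f z2 -> (0 < n)%N.
Proof.
move=> [degf _]; rewrite lt0n; apply: contra => /eqP n0; move: degf; rewrite n0.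
have const_f z : line_deg_le f 0 -> f z = f (0, 0).
  case: z => x y /(_ x y) [q /size1_polyC -> fq].
  by have := fq 1; have := fq 0; rewrite !mulr1 !mulr0 !hornerC => -> ->.
by move=> degf; rewrite !const_f.
Qed.

End Polynomials.

Section HenonMap.
Variables (F : numFieldType) (p : {poly F}) (d : F).
Hypothesis d_neq0 : d != 0.
Hypothesis size_p_gt2 : (2 < size p)%N.

Local Notation h := (henon p d).
Local Notation l := (size p).-1.

Let l_gt1 : (1 < l)%N. Proof. by rewrite -ltnS prednK // (ltn_trans _ size_p_gt2). Qed.

Let size_p_le : (size p <= l.+1)%N. Proof. by rewrite prednK // (ltn_trans _ size_p_gt2). Qed.

Let lead_p_neq0 : p`_l != 0.
Proof. by rewrite -lead_coefE lead_coef_eq0 -size_poly_gt0 (ltn_trans _ size_p_gt2). Qed.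

Definition henon_inv (z : F * F) : F * F := ((p.[z.1] - z.2) / d, z.1).

Lemma henonK : cancel h henon_inv.
Proof. by case=> x y; rewrite /henon /henon_inv /=; congr (_, _); field. Qed.

Lemma henon_invK : cancel henon_inv h.
Proof. by case=> x y; rewrite /henon /henon_inv /=; congr (_, _); field. Qed.

Lemma polyfun2_comp_henon Q (phi : F * F -> F) :
  represents Q phi -> polyfun2 (fun z => phi (h z)).
Proof.
move=> reprphi; exists (comp2 Q 'X%:P (p%:P - d%:P%:P * 'X)) => x y.
rewrite horner2_comp2 /henon /= reprphi /horner2; congr horner2.
  by rewrite hornerC hornerX.
by rewrite !(hornerD, hornerN, hornerM, hornerC, hornerX).
Qed.

Lemma polyfun2_comp_henon_inv Q (phi : F * F -> F) :
  represents Q phi -> polyfun2 (fun z => phi (henon_inv z)).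
Proof.
move=> reprphi; exists (comp2 Q ((d^-1)%:P%:P * (map_poly polyC p - 'X%:P)) 'X) => x y.
rewrite horner2_comp2 /henon_inv /= reprphi /horner2; congr horner2.
  rewrite !(hornerD, hornerN, hornerM, hornerC, hornerX).
  by rewrite horner_map /= hornerC mulrC.
by rewrite hornerX hornerC.
Qed.

Let size_comp_line (a b : F) : (size (p \Po (a *: 'X) - b *: 'X)%R <= l.+1)%N.
Proof.
have size_comp : (size (p \Po (a *: 'X)) <= l.+1)%N.
  apply: leq_trans (size_comp_poly_leq _ _) _; rewrite ltnS.
  have := size_scaleX_le a.
  by case: (size (a *: 'X)) => [|[|[|k]]] //= _; rewrite ?muln0 ?muln1.
apply: leq_trans (size_polyD _ _) _; rewrite size_polyN geq_max size_comp /=.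
by apply: leq_trans (size_scaleX_le _) _; rewrite ltnS ltnW.
Qed.

Lemma line_deg_le_comp_henon Q (phi : F * F -> F) : represents Q phi ->
  Q`_0`_(tdeg Q) = 0 -> line_deg_le (fun z => phi (h z)) (l * tdeg Q).-1.
Proof.
move=> reprphi top0 a b; set v := p \Po (b *: 'X) - (d * a) *: 'X.
exists (subst2 Q (b *: 'X) v) => [|t]; last first.
  rewrite horner_subst2 /henon /= reprphi hornerD hornerN horner_comp !hornerZ hornerX.
  by rewrite mulrA.
have [s c] := coef_subst2_lead_y Q (size_scaleX_le b) (size_comp_line b (d * a)) l_gt1.
rewrite top0 mul0r mulnC in s c.
by apply: leq_trans (size_poly_leq_coef0 s c) _; rewrite leqSpred.
Qed.

Lemma not_line_deg_le_comp_henon Q (phi : F * F -> F) m : represents Q phi ->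
  Q`_0`_(tdeg Q) != 0 -> (m < l * tdeg Q)%N -> ~ line_deg_le (fun z => phi (h z)) m.
Proof.
move=> reprphi top_neq0; rewrite mulnC.
have sX : (size ('X : {poly F}) <= 2)%N by rewrite size_polyX.
have [_ c] := coef_subst2_lead_y Q sX size_p_le l_gt1.
apply: (not_line_deg_le (a := 0) (b := 1) (r := subst2 Q 'X p)).
  by move=> t; rewrite horner_subst2 /henon /= reprphi hornerX mul0r mulr0 subr0 mul1r.
by rewrite c mulf_neq0 // expf_neq0.
Qed.

Lemma line_deg_le_comp_henon_inv Q (phi : F * F -> F) : represents Q phi ->
  Q`_(tdeg Q)`_0 = 0 -> line_deg_le (fun z => phi (henon_inv z)) (l * tdeg Q).-1.
Proof.
move=> reprphi top0 a b; set u := d^-1 *: (p \Po (a *: 'X) - b *: 'X).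
exists (subst2 Q u (a *: 'X)) => [|t]; last first.
  rewrite horner_subst2 /henon_inv /= reprphi !hornerZ hornerD hornerN horner_comp.
  by rewrite !hornerZ hornerX mulrC.
have size_u : (size u <= l.+1)%N by apply: leq_trans (size_scale_leq _ _) (size_comp_line _ _).
have [s c] := coef_subst2_lead_x Q size_u (size_scaleX_le a) l_gt1.
rewrite top0 mul0r mulnC in s c.
by apply: leq_trans (size_poly_leq_coef0 s c) _; rewrite leqSpred.
Qed.

Lemma not_line_deg_le_comp_henon_inv Q (phi : F * F -> F) m : represents Q phi ->
  Q`_(tdeg Q)`_0 != 0 -> (m < l * tdeg Q)%N -> ~ line_deg_le (fun z => phi (henon_inv z)) m.
Proof.
move=> reprphi top_neq0; rewrite mulnC.
have sX : (size ('X : {poly F}) <= 2)%N by rewrite size_polyX.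
have size_u : (size (d^-1 *: p) <= l.+1)%N by apply: leq_trans (size_scale_leq _ _) size_p_le.
have [_ c] := coef_subst2_lead_x Q size_u sX l_gt1.
apply: (not_line_deg_le (a := 1) (b := 0) (r := subst2 Q (d^-1 *: p) 'X)).
  move=> t; rewrite horner_subst2 /henon_inv /= reprphi hornerZ hornerX.
  by rewrite !mul1r mul0r subr0 mulrC.
by rewrite c coefZ mulf_neq0 // expf_neq0 // mulf_neq0 // invr_neq0.
Qed.

Lemma not_line_deg_le_horner_comp Q (phi : F * F -> F) m : represents Q phi ->
  (0 < tdeg Q)%N -> (m < l * tdeg Q)%N -> ~ line_deg_le (fun z => p.[phi z]) m.
Proof.
move=> reprphi tdeg_gt0 lt_m.
have nzQ : Q != 0 by apply: contraTneq tdeg_gt0 => ->; rewrite tdeg0.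
have [b [s c]] := tdeg_on_line nzQ; set r := subst2 Q (b *: 'X) 'X in s c.
have size_r : size r = (tdeg Q).+1.
  apply/eqP; rewrite eqn_leq s ltnNge; apply: contra c => s'.
  by apply/eqP; apply: (leq_sizeP _ _ s').
have size_pr : (size (p \Po r)).-1 = (l * tdeg Q)%N by rewrite size_comp_poly size_r.
apply: (not_line_deg_le (a := b) (b := 1) (r := p \Po r) _ _ lt_m).
  by move=> t; rewrite horner_comp /r horner_subst2 hornerZ hornerX mul1r reprphi.
rewrite -size_pr -lead_coefE lead_coef_eq0 -size_poly_eq0.
by apply: contraTneq tdeg_gt0 => size0; move: size_pr l_gt1; rewrite size0; nia.
Qed.

Definition reversor (G : F * F -> F * F) :=
  [/\ involutive G, forall z, G (h z) = henon_inv (G z),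
      polyfun2 (fun z => (G z).1) & polyfun2 (fun z => (G z).2)].

Section Reversor.
Variable G : F * F -> F * F.
Hypothesis revG : reversor G.

Lemma reversor_henon_inv z : G (henon_inv z) = h (G z).
Proof. by case: revG => G_inv G_h _ _; rewrite -{2}(henon_invK z) G_h henon_invK. Qed.

Lemma reversor_comp_henon : reversor (fun z => G (h z)).
Proof.
case: revG => G_inv G_h [Qf reprf] [Qg reprg]; split.
- by move=> z; rewrite G_h G_inv henonK.
- by move=> z; rewrite G_h.
- exact: polyfun2_comp_henon reprf.
- exact: polyfun2_comp_henon reprg.
Qed.

Lemma reversor_comp_henon_inv : reversor (fun z => G (henon_inv z)).
Proof.
case: (revG) => G_inv G_h [Qf reprf] [Qg reprg]; split.
- by move=> z; rewrite reversor_henon_inv G_inv henon_invK.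
- by move=> z; rewrite henonK reversor_henon_inv henonK.
- exact: polyfun2_comp_henon_inv reprf.
- exact: polyfun2_comp_henon_inv reprg.
Qed.

Lemma reversor_snd z : (G z).2 = (G (henon_inv z)).1.
Proof. by rewrite reversor_henon_inv. Qed.

Lemma reversor_horner_fst z : p.[(G z).1] = d * (G (h z)).1 + (G z).2.
Proof. by case: revG => _ G_h _ _; rewrite G_h /henon_inv /=; field. Qed.

Lemma reversor_horner_snd z : p.[(G z).2] = d * (G z).1 + (G (henon_inv z)).2.
Proof. by rewrite reversor_henon_inv /henon /=; ring. Qed.

End Reversor.

Section MinimalReversor.
Variables (G : F * F -> F * F) (Qf Qg : {poly {poly F}}).
Hypothesis revG : reversor G.
Hypothesis reprf : represents Qf (fun z => (G z).1).
Hypothesis reprg : represents Qg (fun z => (G z).2).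
Hypothesis minG : forall G' n' e', reversor G' ->
  line_deg (fun z => (G' z).1) n' -> line_deg (fun z => (G' z).2) e' ->
  (tdeg Qf + tdeg Qg <= n' + e')%N.

Local Notation n := (tdeg Qf).
Local Notation e := (tdeg Qg).

Let G_inv : involutive G. Proof. by case: revG. Qed.

Let horner2_fst_reversor w : horner2 Qf (G w).1 (G w).2 = w.1.
Proof. by rewrite -reprf -surjective_pairing G_inv. Qed.

Let horner2_snd_reversor w : horner2 Qg (G w).1 (G w).2 = w.2.
Proof. by rewrite -reprg -surjective_pairing G_inv. Qed.

Let sX : (size ('X : {poly F}) <= 2)%N. Proof. by rewrite size_polyX. Qed.

Lemma tdeg_fst_gt0 : (0 < n)%N.
Proof.
apply: (line_deg_gt0 (z1 := G (0, 0)) (z2 := G (1, 0)) (line_deg_tdeg reprf)).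
by rewrite /= !G_inv eq_sym oner_neq0.
Qed.

Lemma tdeg_snd_gt0 : (0 < e)%N.
Proof.
apply: (line_deg_gt0 (z1 := G (0, 0)) (z2 := G (0, 1)) (line_deg_tdeg reprg)).
by rewrite /= !G_inv eq_sym oner_neq0.
Qed.

(* Otherwise f o h has degree < l n; minimality, applied to R o h = (f o h, f),
   bounds deg g by deg (f o h), so p(f) = d (f o h) + g would too. *)
Lemma min_reversor_lead_y : Qf`_0`_n != 0.
Proof.
apply/negP => /eqP top0; have degfh := line_deg_le_comp_henon reprf top0.
have [Qfh reprfh] := polyfun2_comp_henon reprf.
have deggh : line_deg (fun z => (G (h z)).2) n.
  by apply: eq_line_deg (line_deg_tdeg reprf) => z; case: revG => _ -> _ _.
have := minG (reversor_comp_henon revG) (line_deg_tdeg reprfh) deggh.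
have := line_deg_leq (line_deg_tdeg reprfh) degfh => le_fh le_sum.
have degg : line_deg_le (fun z => (G z).2) (l * n).-1.
  by apply: line_deg_le_leq (line_deg_le_tdeg reprg) _; lia.
have degp : line_deg_le (fun z => p.[(G z).1]) (l * n).-1.
  apply: eq_line_deg_le (line_deg_le_lin d degfh degg) => z /=.
  by rewrite (reversor_horner_fst revG).
apply: (not_line_deg_le_horner_comp reprf tdeg_fst_gt0 _ degp).
by rewrite prednK // muln_gt0 tdeg_fst_gt0 andbT (ltn_trans _ l_gt1).
Qed.

Lemma min_reversor_lead_x : Qg`_e`_0 != 0.
Proof.
apply/negP => /eqP top0; have deggh := line_deg_le_comp_henon_inv reprg top0.
have [Qgh reprgh] := polyfun2_comp_henon_inv reprg.
have degfh : line_deg (fun z => (G (henon_inv z)).1) e.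
  by apply: eq_line_deg (line_deg_tdeg reprg) => z; rewrite (reversor_snd revG).
have := minG (reversor_comp_henon_inv revG) degfh (line_deg_tdeg reprgh).
have := line_deg_leq (line_deg_tdeg reprgh) deggh => le_gh le_sum.
have degf : line_deg_le (fun z => (G z).1) (l * e).-1.
  by apply: line_deg_le_leq (line_deg_le_tdeg reprf) _; lia.
have degp : line_deg_le (fun z => p.[(G z).2]) (l * e).-1.
  apply: eq_line_deg_le (line_deg_le_lin d degf deggh) => z /=.
  by rewrite (reversor_horner_snd revG).
apply: (not_line_deg_le_horner_comp reprg tdeg_snd_gt0 _ degp).
by rewrite prednK // muln_gt0 tdeg_snd_gt0 andbT (ltn_trans _ l_gt1).
Qed.

(* On a line where f has its full degree n, g (f, g) = y would have degree e n > 1. *)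
Lemma min_reversor_tdeg_leq : (n <= e)%N.
Proof.
rewrite leqNgt; apply/negP => lt_en.
have nzQf : Qf != 0 by apply: contraTneq tdeg_fst_gt0 => ->; rewrite tdeg0.
have [b [size_rf top_rf]] := tdeg_on_line nzQf.
set rf := subst2 Qf (b *: 'X) 'X in size_rf top_rf.
set rg := subst2 Qg (b *: 'X) 'X.
have size_rg : (size rg <= e.+1)%N.
  by apply: size_subst2_le (size_scaleX_le b) sX _ => i j /tdeg_ge; rewrite !muln1.
have [_ top] := coef_subst2_lead_x Qg size_rf size_rg lt_en.
have eq_X : subst2 Qg rf rg = 'X.
  apply: eq_poly_horner => t; rewrite !horner_subst2 hornerZ hornerX.
  by rewrite -(reprf (b * t) t) -(reprg (b * t) t) horner2_snd_reversor.
move: top; rewrite eq_X coefX (_ : (e * n == 1)%N = false); last first.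
  by apply/eqP; have := tdeg_snd_gt0; nia.
move/esym/eqP; rewrite mulf_eq0 expf_eq0 (negbTE top_rf) andbF orbF.
by apply/negP: min_reversor_lead_x.
Qed.

Lemma min_reversor_tdeg_geq : (e <= n)%N.
Proof.
rewrite leqNgt; apply/negP => lt_ne.
have nzQg : Qg != 0 by apply: contraTneq tdeg_snd_gt0 => ->; rewrite tdeg0.
have [b [size_rg top_rg]] := tdeg_on_line nzQg.
set rg := subst2 Qg (b *: 'X) 'X in size_rg top_rg.
set rf := subst2 Qf (b *: 'X) 'X.
have size_rf : (size rf <= n.+1)%N.
  by apply: size_subst2_le (size_scaleX_le b) sX _ => i j /tdeg_ge; rewrite !muln1.
have [_ top] := coef_subst2_lead_y Qf size_rf size_rg lt_ne.
have eq_X : subst2 Qf rf rg = b *: 'X.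
  apply: eq_poly_horner => t; rewrite !horner_subst2 !hornerZ hornerX.
  by rewrite -(reprf (b * t) t) -(reprg (b * t) t) horner2_fst_reversor.
move: top; rewrite eq_X coefZ coefX (_ : (n * e == 1)%N = false); last first.
  by apply/eqP; have := tdeg_fst_gt0; nia.
move/esym/eqP; rewrite mulr0 mulf_eq0 expf_eq0 (negbTE top_rg) andbF orbF.
by apply/negP: min_reversor_lead_y.
Qed.

(* For n = e > 1 the coefficients of x^n in f and y^n in g vanish, so along y = 0
   f (f, g) = x would have degree n^2. *)
Lemma min_reversor_tdeg_fst1 : n = 1%N.
Proof.
have eq_ne : n = e by apply/eqP; rewrite eqn_leq min_reversor_tdeg_leq min_reversor_tdeg_geq.
apply/eqP/negPn/negP => n_neq1; have n_gt1 : (1 < n)%N by move: tdeg_fst_gt0 n_neq1; lia.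
have lt_nln : (n < l * n)%N by move: n_gt1 l_gt1; nia.
have topf0 : Qf`_n`_0 = 0.
  apply/eqP/negPn/negP => nz; apply: (not_line_deg_le_comp_henon_inv reprf nz lt_nln).
  rewrite eq_ne; apply: eq_line_deg_le (line_deg_le_tdeg reprg) => z.
  exact: (reversor_snd revG).
have topg0 : Qg`_0`_e = 0.
  apply/eqP/negPn/negP => nz; apply: (not_line_deg_le_comp_henon reprg nz (m := e)).
    by rewrite -eq_ne.
  rewrite -eq_ne; apply: eq_line_deg_le (line_deg_le_tdeg reprf) => z.
  by case: revG => _ -> _ _.
have size0 : (size (0%R : {poly F}) <= 0.+1)%N by rewrite size_poly0.
have size_u : (size (subst2 Qf 'X 0) <= n.-1.+1)%N.
  apply: size_subst2_le sX size0 _ => i j nzQ; rewrite muln1 muln0 addn0.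
  have := tdeg_ge nzQ; have [def_i|ne_i] := eqVneq i n; last by move: ne_i; lia.
  by rewrite def_i => le_j; move: nzQ; rewrite def_i (_ : j = 0%N) ?topf0 ?eqxx //; lia.
have [size_v top_v] := coef_subst2_lead_x Qg sX size0 (ltn0Sn 0).
rewrite muln1 -eq_ne coefX eqxx expr1n mulr1 in size_v top_v.
have lt_pred : (n.-1 < n)%N by rewrite ltn_predL tdeg_fst_gt0.
have [_ top] := coef_subst2_lead_y Qf size_u size_v lt_pred.
have eq_X : subst2 Qf (subst2 Qf 'X 0) (subst2 Qg 'X 0) = 'X.
  apply: eq_poly_horner => t; rewrite !horner_subst2 hornerX horner0.
  by rewrite -(reprf t 0) -(reprg t 0) horner2_fst_reversor.
move: top; rewrite eq_X coefX (_ : (n * n == 1)%N = false); last by apply/eqP; nia.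
move/esym/eqP; rewrite top_v mulf_eq0 expf_eq0 (negbTE min_reversor_lead_y) eq_ne.
by rewrite (negbTE min_reversor_lead_x) andbF.
Qed.

Lemma min_reversor_tdeg_snd1 : e = 1%N.
Proof.
apply/eqP; rewrite eqn_leq -{1}min_reversor_tdeg_fst1 min_reversor_tdeg_geq.
by rewrite tdeg_snd_gt0.
Qed.

End MinimalReversor.

Section AffineReversor.
Variables (G : F * F -> F * F) (Qf Qg : {poly {poly F}}).
Hypothesis revG : reversor G.
Hypothesis reprf : represents Qf (fun z => (G z).1).
Hypothesis reprg : represents Qg (fun z => (G z).2).
Hypothesis tdeg_fst1 : tdeg Qf = 1%N.
Hypothesis tdeg_snd1 : tdeg Qg = 1%N.

Lemma affine_reversorE : exists c B, forall x y, G (x, y) = (c + B * y, c + B * x).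
Proof.
have sX : (size ('X : {poly F}) <= 2)%N by rewrite size_polyX.
have size0 : (size (0%R : {poly F}) <= 0.+1)%N by rewrite size_poly0.
have topf0 : Qf`_(tdeg Qf)`_0 = 0.
  apply/eqP/negPn/negP => nz; apply: (not_line_deg_le_comp_henon_inv reprf nz (m := 1)).
    by rewrite tdeg_fst1 muln1.
  rewrite -tdeg_snd1; apply: eq_line_deg_le (line_deg_le_tdeg reprg) => z.
  exact: (reversor_snd revG).
have f_const x : (G (x, 0)).1 = (G (0, 0)).1.
  have [s top] := coef_subst2_lead_x Qf sX size0 (ltn0Sn 0).
  rewrite topf0 mul0r in top; have := size_poly_leq_coef0 s top.
  rewrite tdeg_fst1 muln1 => /size1_polyC eq_c.
  have ev t : (G (t, 0)).1 = (subst2 Qf 'X 0).[t].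
    by rewrite horner_subst2 hornerX horner0 reprf.
  by rewrite !ev eq_c !hornerC.
have f_line x y : (G (x, y)).1 = (G (x, 0)).1 + Qf`_0`_1 * y.
  have [s top] := coef_subst2_lead_y Qf (size_polyC_leq1 x) sX (ltn0Sn 0).
  rewrite tdeg_fst1 muln1 coefX eqxx expr1n mulr1 in s top.
  have ev t : (G (x, t)).1 = (subst2 Qf x%:P 'X).[t].
    by rewrite horner_subst2 hornerC hornerX reprf.
  by rewrite !ev horner_coef0 (horner_size2 _ s) top.
have f_affine x y : (G (x, y)).1 = (G (0, 0)).1 + Qf`_0`_1 * y by rewrite f_line f_const.
exists (G (0, 0)).1, Qf`_0`_1 => x y.
by rewrite [LHS]surjective_pairing (reversor_snd revG (x, y)) (f_affine x y) (f_affine _ x).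
Qed.

End AffineReversor.

Lemma affine_reversor_henon G c B : reversor G ->
  (forall x y, G (x, y) = (c + B * y, c + B * x)) ->
  d = 1 \/ (d = -1 /\ forall y, p.[c - y] = p.[y]).
Proof.
move=> revG G_affine; have [G_inv _ _ _] := revG.
have fix0 : c + B * c = 0.
  by have := congr1 fst (G_inv (0, 0)); rewrite !G_affine /= !mulr0 !addr0.
have fix1 : c + B * (c + B) = 1.
  by have := congr1 fst (G_inv (1, 0)); rewrite !G_affine /= mulr1.
have B2 : B ^+ 2 = 1 by rewrite -fix1 mulrDr addrA fix0 add0r expr2.
have B_neq0 : B != 0.
  by apply/eqP => B0; move: B2; rewrite B0 expr0n => /eqP; rewrite eq_sym oner_eq0.
have horner_line y x : p.[c + B * y] = d * (c + B * (p.[y] - d * x)) + (c + B * x).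
  by have := reversor_horner_fst revG (x, y); rewrite /henon /= !G_affine.
have d2 : d ^+ 2 = 1.
  have : B * (1 - d ^+ 2) = 0.
    have -> : B * (1 - d ^+ 2) = (d * (c + B * (p.[0] - d * 1)) + (c + B * 1))
                               - (d * (c + B * (p.[0] - d * 0)) + (c + B * 0)) by ring.
    by rewrite -horner_line -horner_line subrr.
  by move/eqP; rewrite mulf_eq0 (negbTE B_neq0) /= subr_eq0 => /eqP <-.
have : (d - 1) * (d + 1) = 0 by rewrite -subr_sqr expr1n d2 subrr.
move/eqP; rewrite mulf_eq0 subr_eq0 addr_eq0 => /orP [/eqP -> | /eqP dN1]; first by left.
right; split => // y; have := horner_line y 0; rewrite dN1 mulr0 subr0 mulr0 addr0.
have : (B - 1) * (B + 1) = 0 by rewrite -subr_sqr expr1n B2 subrr.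
move/eqP; rewrite mulf_eq0 subr_eq0 addr_eq0 => /orP [/eqP B1 | /eqP ->]; last first.
  by rewrite !mulN1r => ->; ring.
have c0 : c = 0.
  by move: fix0; rewrite B1 mul1r => /eqP; rewrite -mulr2n mulrn_eq0 /= => /eqP.
move: size_p_gt2; suff -> : p = 0 by rewrite size_poly0.
apply: eq_poly_horner => t; rewrite horner0; have := horner_line t 0.
rewrite c0 B1 dN1 !(add0r, mul1r, mulr0, subr0, addr0, mulN1r) => /eqP.
by rewrite -subr_eq0 opprK -mulr2n mulrn_eq0 /= => /eqP.
Qed.

Lemma reversible_reversor : reversible_by_involution h -> exists G, reversor G.
Proof.
case=> R [[[P [Q RPQ]] _] [R_inv [hRhR _]]]; exists R; split => //.
- by move=> z; have := hRhR (R z); rewrite R_inv => <-; rewrite henonK.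
- by exists P => x y; rewrite RPQ.
- by exists Q => x y; rewrite RPQ.
Qed.

(* A reversor of minimal degree exists; minimality forces it to be affine. *)
Lemma reversor_henon_normal G : p`_(size p).-2 = 0 -> reversor G ->
  d = 1 \/ (d = -1 /\ is_even_poly p).
Proof.
move=> sub0 revG.
pose total_deg N := exists G' n' e', [/\ reversor G', line_deg (fun z => (G' z).1) n',
  line_deg (fun z => (G' z).2) e' & (n' + e')%N = N].
have : exists N, total_deg N.
  case: (revG) => _ _ [Qf reprf] [Qg reprg].
  exists (tdeg Qf + tdeg Qg)%N, G, (tdeg Qf), (tdeg Qg).
  by split; rewrite //; [exact: line_deg_tdeg reprf | exact: line_deg_tdeg reprg].
case/ex_minimal => _ [[G0 [n0 [e0 [revG0 deg_f deg_g <-]]]] minN].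
case: (revG0) => _ _ [Qf reprf] [Qg reprg].
have minG0 G' n' e' : reversor G' -> line_deg (fun z => (G' z).1) n' ->
    line_deg (fun z => (G' z).2) e' -> (tdeg Qf + tdeg Qg <= n' + e')%N.
  rewrite (tdeg_line_deg reprf deg_f) (tdeg_line_deg reprg deg_g) => revG' deg_f' deg_g'.
  by apply: minN; exists G', n', e'.
have [c [B G0E]] := affine_reversorE revG0 reprf reprg
  (min_reversor_tdeg_fst1 revG0 reprf reprg minG0)
  (min_reversor_tdeg_snd1 revG0 reprf reprg minG0).
case: (affine_reversor_henon revG0 G0E) => [-> | [dN1 p_sym]]; [by left | right; split=> // y].
by rewrite -[RHS]p_sym (reflection_center_eq0 (ltnW size_p_gt2) sub0 p_sym) sub0r.
Qed.

End HenonMap.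

Section ReversibleHenon.
Variable K : comNzRingType.

Lemma reversible_henon1 (p : {poly K}) : reversible_by_involution (henon p 1).
Proof.
have swap_map : poly_map (fun z : K * K => (z.2, z.1)).
  by exists 'X%:P, 'X => x y; rewrite hornerC !hornerX hornerC.
exists (fun z => (z.2, z.1)); split.
  by split=> //; exists (fun z => (z.2, z.1)); split=> //; split; case.
by split; [case | split; case=> x y; rewrite /henon /=; congr (_, _); ring].
Qed.

Lemma reversible_henonN1 (p : {poly K}) :
  is_even_poly p -> reversible_by_involution (henon p (-1)).
Proof.
move=> even_p; have nswap_map : poly_map (fun z : K * K => (- z.2, - z.1)).
  by exists (- 'X%:P), (- 'X) => x y; rewrite !hornerN hornerC !hornerX hornerC.
exists (fun z => (- z.2, - z.1)); split.
  split=> //; exists (fun z => (- z.2, - z.1)); split=> //.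
  by split; case=> x y /=; rewrite !opprK.
split; first by case=> x y /=; rewrite !opprK.
by split; case=> x y; rewrite /henon /=; congr (_, _); rewrite ?even_p; ring.
Qed.

End ReversibleHenon.

Theorem mainTheorem9 (R : realType) (p : {poly R[i]}) (delta : R[i]) :
  delta != 0 -> normal_henon_poly p ->
  (reversible_by_involution (henon p delta) <->
   (delta = 1 \/ (delta = -1 /\ is_even_poly p))).
Proof.
move=> delta_neq0 [size_p [_ sub0]]; split.
  case/(reversible_reversor delta_neq0) => G revG.
  exact: (reversor_henon_normal delta_neq0 size_p sub0 revG).
by case=> [-> | [-> /reversible_henonN1 //]]; apply: reversible_henon1.
Qed.
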